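(* Let $G$ be a finite abelian group of order $n$, let $S$ be the set of bijections $\{1,\dots,n\}\to G$, let $d\ge1$, and let $\pi\in S$. Then the transversals of the Latin cube $L^d(G,\pi)$ are in bijection with the solutions of \[ \pi_1+\cdots+\pi_d=\pi\qquad(\pi_1,\dots,\pi_d\in S). \] In particular, if $T(L^d(G,\pi))$ denotes the number of transversals of $L^d(G,\pi)$, then $T(L^d(G,\pi))\cdot n!$ equals the number of solutions of \[ \pi_1+\cdots+\pi_d=\pi_{d+1}\qquad(\pi_1,\dots,\pi_{d+1}\in S). \]
   Context: Sums of functions $\{1,\dots,n\}\to G$ are pointwise. A Latin cube of dimension $d$ and order $n$ is a $d$-dimensional array indexed by $\{1,\dots,n\}^d$ with entries (symbols) in $\{1,\dots,n\}$ such that no symbol occurs more than once in any axis-parallel line. A transversal is a selection of $n$ entries such that no two lie in a common axis-parallel hyperplane (i.e. share the value of some coordinate) and no two have the same symbol. $L^d(G,\pi)$ is the Latin cube whose $(i_1,\dots,i_d)$-entry is $\pi^{-1}(\pi(i_1)+\cdots+\pi(i_d))$. *)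

From mathcomp Require Import all_boot all_order all_algebra.
Set Implicit Arguments. Unset Strict Implicit. Unset Printing Implicit Defensive.
Import GRing.Theory.
Local Open Scope ring_scope.

Definition is_bij (n : nat) (G : finType) (f : {ffun 'I_n -> G}) : bool :=
  injectiveb f && [forall g : G, g \in codom f].

Definition bijS (n : nat) (G : finType) : {set {ffun 'I_n -> G}} :=
  [set f : {ffun 'I_n -> G} | is_bij f].

Definition cell (n d : nat) := {ffun 'I_d -> 'I_n}.

(* pi^{-1}(g), as an option (always Some when pi is a bijection) *)
Definition pinv (n : nat) (G : finType) (pi : {ffun 'I_n -> G}) (g : G)
  : option 'I_n := [pick i | pi i == g].

Definition LdG (n d : nat) (G : finZmodType) (pi : {ffun 'I_n -> G})
  (c : cell n d) : option 'I_n :=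
  pinv pi (\sum_(k < d) pi (c k)).

Definition is_transversal (n d : nat) (T : eqType) (L : cell n d -> T)
  (X : {set cell n d}) : bool :=
  (#|X| == n) &&
  [forall x in X, forall y in X,
     (x != y) ==> ([forall k : 'I_d, x k != y k] && (L x != L y))].

Definition transversals (n d : nat) (T : eqType) (L : cell n d -> T)
  : {set {set cell n d}} := [set X : {set cell n d} | is_transversal L X].

Definition sols (n d : nat) (G : finZmodType) (pi : {ffun 'I_n -> G})
  : {set {ffun 'I_d -> {ffun 'I_n -> G}}} :=
  [set P : {ffun 'I_d -> {ffun 'I_n -> G}} | [forall k, P k \in bijS n G] &&
           [forall i : 'I_n, \sum_(k < d) P k i == pi i]].

Definition sols2 (n d : nat) (G : finZmodType)
  : {set {ffun 'I_d -> {ffun 'I_n -> G}} * {ffun 'I_n -> G}} :=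
  [set Pq : {ffun 'I_d -> {ffun 'I_n -> G}} * {ffun 'I_n -> G} | [forall k, Pq.1 k \in bijS n G] && (Pq.2 \in bijS n G) &&
            [forall i : 'I_n, \sum_(k < d) Pq.1 k i == Pq.2 i]].

From mathcomp Require Import all_boot all_order all_algebra.
Set Implicit Arguments. Unset Strict Implicit. Unset Printing Implicit Defensive.
Import GRing.Theory.

(* A solution (pi_1, ..., pi_d) of pi_1 + ... + pi_d = pi yields the set of
   cells c_s = (pi^-1 (pi_1 s), ..., pi^-1 (pi_d s)), s in {1..n}: the cell c_s
   carries the symbol s, and two cells never share a coordinate because each
   pi_k is injective, so this set is a transversal.  Conversely a transversal
   has exactly one cell with each symbol s, and reading its coordinates through
   pi gives back the pi_k.  For the count, precomposing every pi_k with
   pi^-1 o pi_(d+1) turns the solutions with right-hand side pi into those with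
   right-hand side pi_(d+1), which can be any of the n! bijections. *)

Section Bijections.

Variables (n : nat) (G : finType).
Implicit Types (f : {ffun 'I_n -> G}) (g : G).

Lemma bijS_inj f : f \in bijS n G -> injective f.
Proof. by rewrite inE => /andP[/injectiveP]. Qed.

Lemma bijS_codom f g : f \in bijS n G -> g \in codom f.
Proof. by rewrite inE => /andP[_ /forallP]. Qed.

Variable i0 : 'I_n.

(* i0 is a junk value, returned only off the image of f. *)
Definition finv f g : 'I_n := odflt i0 (pinv f g).

Lemma pinv_bijS f g : f \in bijS n G -> pinv f g = Some (finv f g).
Proof.
move=> f_bij; rewrite /finv /pinv; case: pickP => // no_preim.
have /codomP[i g_fi] := bijS_codom g f_bij.
by move: (no_preim i); rewrite g_fi eqxx.
Qed.

Lemma f_finv f : f \in bijS n G -> cancel (finv f) f.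
Proof.
move=> f_bij g; move: (pinv_bijS g f_bij); rewrite /pinv.
by case: pickP => // i /eqP <- [<-].
Qed.

Lemma finv_f f : f \in bijS n G -> cancel f (finv f).
Proof. by move=> f_bij i; apply: (bijS_inj f_bij); rewrite f_finv. Qed.

Hypothesis card_G : #|G| = n.

Lemma bijSE f : (f \in bijS n G) = injectiveb f.
Proof.
rewrite inE /is_bij; case: injectiveP => //= f_inj.
by apply/forallP => g; apply: inj_card_onto; rewrite ?card_ord ?card_G.
Qed.

Lemma card_bijS : #|bijS n G| = n`!.
Proof.
have -> : bijS n G = [set f : {ffun _ -> _} | injectiveb f].
  by apply/setP => f; rewrite bijSE inE.
by rewrite card_inj_ffuns card_ord card_G ffactnn.
Qed.

Lemma bijS_comp f (s : 'I_n -> 'I_n) :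
  f \in bijS n G -> injective s -> [ffun i => f (s i)] \in bijS n G.
Proof.
move=> f_bij s_inj; rewrite bijSE; apply/injectiveP => i j.
by rewrite !ffunE => /(bijS_inj f_bij) /s_inj.
Qed.

End Bijections.

Section LatinCube.

Local Open Scope ring_scope.

Variables (G : finZmodType) (n d : nat) (i0 : 'I_n) (pi : {ffun 'I_n -> G}).
Hypotheses (card_G : #|G| = n) (pi_bij : pi \in bijS n G).

Local Notation finv := (finv i0).
Local Notation L := (@LdG n d G pi).
Local Notation sol := {ffun 'I_d -> {ffun 'I_n -> G}}.
Implicit Types (x y : cell n d) (X : {set cell n d}) (P : sol) (s t : 'I_n).

Definition symbol x : 'I_n := finv pi (\sum_(k < d) pi (x k)).

Lemma LdG_symbol x : L x = Some (symbol x).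
Proof. exact: pinv_bijS. Qed.

Lemma pi_symbol x : pi (symbol x) = \sum_(k < d) pi (x k).
Proof. exact: f_finv. Qed.

Lemma solsP (q : {ffun 'I_n -> G}) P :
  reflect ((forall k, P k \in bijS n G) /\ forall i, \sum_(k < d) P k i = q i)
          (P \in sols d q).
Proof.
rewrite inE; apply: (iffP andP) => [[/forallP P_bij /forallP P_sum]|[P_bij P_sum]].
  by split=> // i; apply/eqP.
by split; apply/forallP => // i; apply/eqP.
Qed.

Lemma transversalP X :
  reflect (#|X| = n /\ {in X &, forall x y, x != y ->
             (forall k, x k != y k) /\ symbol x != symbol y})
          (X \in transversals L).
Proof.
rewrite inE /is_transversal; apply: (iffP andP) => [[/eqP cardX /forall_inP X_tr]|].
  split=> // x y xX yX xy; move/forall_inP: (X_tr x xX) => /(_ y yX).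
  by rewrite xy !LdG_symbol (inj_eq Some_inj) => /andP[/forallP].
case=> cardX X_tr; split; first exact/eqP.
apply/forall_inP => x xX; apply/forall_inP => y yX; apply/implyP => xy.
have [coord_neq sym_neq] := X_tr x y xX yX xy.
by rewrite !LdG_symbol (inj_eq Some_inj); apply/andP; split; first exact/forallP.
Qed.

Definition cell_of P s : cell n d := [ffun k => finv pi (P k s)].

Definition transversal_of P : {set cell n d} := [set cell_of P s | s : 'I_n].

Lemma symbol_cell_of P s : P \in sols d pi -> symbol (cell_of P s) = s.
Proof.
case/solsP=> _ P_sum; apply: (bijS_inj pi_bij); rewrite pi_symbol -P_sum.
by apply: eq_bigr => k _; rewrite ffunE f_finv.
Qed.

Lemma transversal_of_sols P :
  P \in sols d pi -> transversal_of P \in transversals L.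
Proof.
move=> P_sol; have /solsP[P_bij _] := P_sol.
have cell_of_inj : injective (cell_of P).
  by move=> s t /(congr1 symbol); rewrite !symbol_cell_of.
apply/transversalP; split; first by rewrite card_imset // card_ord.
move=> _ _ /imsetP[s _ ->] /imsetP[t _ ->] st_neq.
have {}st_neq : s != t by apply: contraNneq st_neq => ->.
rewrite !symbol_cell_of //; split=> // k; rewrite !ffunE.
by rewrite (can_eq (f_finv i0 pi_bij)) (inj_eq (bijS_inj (P_bij k))).
Qed.

Section FromTransversal.

Variable X : {set cell n d}.
Hypothesis X_tr : X \in transversals L.

Lemma transversal_symbol_inj : {in X &, injective symbol}.
Proof.
have [_ X_neq] := transversalP X X_tr.
by move=> x y xX yX /eqP; apply: contraTeq => /(X_neq x y xX yX)[].
Qed.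

Lemma transversal_coord_inj k : {in X &, injective (fun x : cell n d => x k)}.
Proof.
have [_ X_neq] := transversalP X X_tr.
by move=> x y xX yX /eqP; apply: contraTeq => /(X_neq x y xX yX)[].
Qed.

Definition cell_at s : cell n d :=
  odflt [ffun => i0] [pick x in X | symbol x == s].

Lemma cell_atP s : cell_at s \in X /\ symbol (cell_at s) = s.
Proof.
have [cardX _] := transversalP X X_tr.
have : s \in symbol @: X.
  suff -> : symbol @: X = setT by rewrite inE.
  apply/eqP; rewrite eqEcard subsetT cardsT card_ord.
  by rewrite (card_in_imset transversal_symbol_inj) cardX leqnn.
case/imsetP=> x xX ->; rewrite /cell_at; case: pickP => [y /andP[yX /eqP] //|].
by move/(_ x); rewrite xX eqxx.
Qed.

Definition sol_of : sol := [ffun k => [ffun s => pi (cell_at s k)]].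

Lemma sol_of_sols : sol_of \in sols d pi.
Proof.
apply/solsP; split=> [k|s].
  rewrite (bijSE card_G); apply/injectiveP => s t.
  rewrite !ffunE => /(bijS_inj pi_bij).
  have [sX sym_s] := cell_atP s; have [tX sym_t] := cell_atP t.
  by move/(transversal_coord_inj sX tX) => cell_st; rewrite -sym_s -sym_t cell_st.
have [_ sym_s] := cell_atP s.
by rewrite -{2}sym_s pi_symbol; apply: eq_bigr => k _; rewrite !ffunE.
Qed.

Lemma transversal_of_sol_of : transversal_of sol_of = X.
Proof.
have [cardX _] := transversalP X X_tr.
have [card_of _] := transversalP _ (transversal_of_sols sol_of_sols).
have cell_ofE s : cell_of sol_of s = cell_at s.
  by apply/ffunP => k; rewrite !ffunE finv_f.
apply/eqP; rewrite eqEcard cardX card_of leqnn andbT.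
by apply/subsetP => _ /imsetP[s _ ->]; rewrite cell_ofE; case: (cell_atP s).
Qed.

End FromTransversal.

Lemma sol_of_transversal_of P : P \in sols d pi -> sol_of (transversal_of P) = P.
Proof.
move=> P_sol; have P_tr := transversal_of_sols P_sol.
have cell_atE s : cell_at (transversal_of P) s = cell_of P s.
  have [inX sym_s] := cell_atP P_tr s.
  apply: (transversal_symbol_inj P_tr) => //; first exact: imset_f.
  by rewrite sym_s symbol_cell_of.
by apply/ffunP => k; apply/ffunP => s; rewrite !ffunE cell_atE ffunE f_finv.
Qed.

Lemma transversals_sols_bij :
  exists f : {X | X \in transversals L} -> {P | P \in sols d pi}, bijective f.
Proof.
exists (fun X : {X | X \in transversals L} =>
          exist _ (sol_of (val X)) (sol_of_sols (valP X))).
exists (fun P : {P | P \in sols d pi} =>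
          exist _ (transversal_of (val P)) (transversal_of_sols (valP P))).
  by move=> X; apply: val_inj; rewrite /= transversal_of_sol_of // (valP X).
by move=> P; apply: val_inj; rewrite /= sol_of_transversal_of // (valP P).
Qed.

Lemma card_transversals : #|transversals L| = #|sols d pi|.
Proof. by have [f /bij_eq_card] := transversals_sols_bij; rewrite !card_sig. Qed.

Definition precomp P (sigma : 'I_n -> 'I_n) : sol :=
  [ffun k => [ffun i => P k (sigma i)]].

Lemma precomp_inj (sigma tau : 'I_n -> 'I_n) :
  cancel tau sigma -> injective (precomp^~ sigma).
Proof.
move=> tauK P Q /ffunP PQ; apply/ffunP => k; apply/ffunP => i.
by move/ffunP: (PQ k) => /(_ (tau i)); rewrite !ffunE tauK.
Qed.

Lemma precomp_sols q P (sigma : 'I_n -> 'I_n) : injective sigma ->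
  P \in sols d q -> precomp P sigma \in sols d [ffun i => q (sigma i)].
Proof.
move=> sigma_inj /solsP[P_bij P_sum]; apply/solsP; split=> [k|i].
  by rewrite ffunE; apply: bijS_comp.
by rewrite ffunE -P_sum; apply: eq_bigr => k _; rewrite !ffunE.
Qed.

Lemma precomp_finv_sols q r P : q \in bijS n G -> r \in bijS n G ->
  P \in sols d q -> precomp P (finv q \o r) \in sols d r.
Proof.
move=> q_bij r_bij P_sol.
have r_eq : [ffun i => q ((finv q \o r) i)] = r.
  by apply/ffunP => i; rewrite ffunE f_finv.
rewrite -[in sols d r]r_eq; apply: precomp_sols P_sol.
exact: inj_comp (can_inj (f_finv i0 q_bij)) (bijS_inj r_bij).
Qed.

Lemma sols2E Pq :
  (Pq \in sols2 n d G) = (Pq.2 \in bijS n G) && (Pq.1 \in sols d Pq.2).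
Proof. by rewrite !inE; case: (is_bij Pq.2); rewrite ?andbT ?andbF. Qed.

Definition reframe (Pq : sol * {ffun 'I_n -> G}) :=
  (precomp Pq.1 (finv pi \o Pq.2), Pq.2).

Lemma sols2_reframe : sols2 n d G = reframe @: setX (sols d pi) (bijS n G).
Proof.
apply/setP => -[Q q]; rewrite sols2E /=; apply/andP/imsetP => [[q_bij Q_sol]|].
  exists (precomp Q (finv q \o pi), q).
    by rewrite inE /= q_bij andbT precomp_finv_sols.
  by congr pair; apply/ffunP => k; apply/ffunP => i; rewrite !ffunE /= f_finv ?finv_f.
case=> -[P r] /setXP[/= P_sol r_bij] [-> ->]; split=> //.
exact: precomp_finv_sols.
Qed.

Lemma reframe_inj : {in setX (sols d pi) (bijS n G) &, injective reframe}.
Proof.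
move=> [P q] [P' q'] /setXP[_ q_bij] _ [/= + qq']; rewrite -{}qq' => PP'; congr pair.
by apply: (precomp_inj (tau := finv q \o pi)) PP' => i /=; rewrite f_finv // finv_f.
Qed.

Lemma card_sols2 : #|sols2 n d G| = (#|sols d pi| * n`!)%N.
Proof. by rewrite sols2_reframe (card_in_imset reframe_inj) cardsX card_bijS. Qed.

End LatinCube.

Theorem lemma7p1 (G : finZmodType) (n d : nat) (pi : {ffun 'I_n -> G}) :
  #|G| = n -> (1 <= d)%N -> pi \in bijS n G ->
  (exists f : {X | X \in transversals (@LdG n d G pi)} ->
              {P | P \in @sols n d G pi},
      bijective f) /\
  (#|transversals (@LdG n d G pi)| * n`! = #|sols2 n d G|)%N.
Proof.
move=> card_G _ pi_bij; pose i0 := cast_ord card_G (enum_rank (0 : G)%R).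
split; first exact (transversals_sols_bij d i0 card_G pi_bij).
by rewrite (card_transversals d i0 card_G pi_bij) (card_sols2 d i0 card_G pi_bij).
Qed.
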